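(* Let $\mathcal{A}$ be a unital associative algebra over a field $F$ with $\operatorname{char}(F)\neq 2$. Then (a) $\operatorname{GJDer}(\mathcal{A})=\operatorname{QJCent}(\mathcal{A})+\operatorname{QJDer}(\mathcal{A})$, and (b) $\operatorname{JCent}(\mathcal{A})=\operatorname{QJCent}(\mathcal{A})\cap\operatorname{QJDer}(\mathcal{A})$.
   Context: For $x,y\in\mathcal{A}$ let $x\circ y=xy+yx$. All maps below are $F$-linear maps $\mathcal{A}\to\mathcal{A}$. $\operatorname{GJDer}(\mathcal{A})$ (generalized Jordan derivations) is the set of linear $f$ for which there exist linear $g,h$ with $f(x)\circ y+x\circ g(y)=h(x\circ y)$ for all $x,y\in\mathcal{A}$. $\operatorname{QJCent}(\mathcal{A})$ (quasi Jordan centralizers) is the set of linear $f$ with $f(x)\circ y=x\circ f(y)$ for all $x,y$. $\operatorname{QJDer}(\mathcal{A})$ (quasi Jordan derivations) is the set of linear $f$ for which there exists a linear $h$ with $f(x)\circ y+x\circ f(y)=h(x\circ y)$ for all $x,y$. $\operatorname{JCent}(\mathcal{A})$ (Jordan centralizers) is the set of linear $f$ with $f(x\circ y)=f(x)\circ y$ for all $x,y$. The sum of two sets of maps means the set of all pointwise sums. *)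

From HB Require Import structures.
From mathcomp Require Import all_boot all_order all_algebra.
Set Implicit Arguments. Unset Strict Implicit. Unset Printing Implicit Defensive.
Import GRing.Theory.
Local Open Scope ring_scope.

Section JordanMaps.
Variables (F : fieldType) (A : algType F).

Definition jprod (x y : A) : A := x * y + y * x.

Definition is_flinear (f : A -> A) : Prop :=
  forall (a : F) (x y : A), f (a *: x + y) = a *: f x + f y.

Definition GJDer (f : A -> A) : Prop :=
  is_flinear f /\
  exists g h : A -> A, [/\ is_flinear g, is_flinear h &
    forall x y, jprod (f x) y + jprod x (g y) = h (jprod x y)].

Definition QJCent (f : A -> A) : Prop :=
  is_flinear f /\ forall x y, jprod (f x) y = jprod x (f y).

Definition QJDer (f : A -> A) : Prop :=
  is_flinear f /\
  exists h : A -> A, is_flinear h /\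
    forall x y, jprod (f x) y + jprod x (f y) = h (jprod x y).

Definition JCent (f : A -> A) : Prop :=
  is_flinear f /\ forall x y, f (jprod x y) = jprod (f x) y.

End JordanMaps.

(** If [f(x) o y + x o g(y) = h(x o y)], adding this identity to its mirror
    image (x and y swapped) shows that [f + g] is a quasi Jordan derivation
    with companion [2h], while subtracting it shows that [f - g] is a quasi
    Jordan centralizer; halving gives [f = (f - g)/2 + (f + g)/2].  For (b),
    a quasi Jordan centralizer [f] that is also a quasi Jordan derivation
    satisfies [2 f(x) o y = h(x o y)]; taking [y = 1] forces [h = 2f]. *)

From HB Require Import structures.
From mathcomp Require Import all_boot all_order all_algebra.
Set Implicit Arguments. Unset Strict Implicit. Unset Printing Implicit Defensive.
Import GRing.Theory.
Local Open Scope ring_scope.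

Section JordanMapsTheory.
Variables (F : fieldType) (A : algType F).
Implicit Types (x y u v : A) (f g h : A -> A).

Lemma jprodC x y : jprod x y = jprod y x.
Proof. by rewrite /jprod addrC. Qed.

Lemma jprodDl x u v : jprod (u + v) x = jprod u x + jprod v x.
Proof. by rewrite /jprod mulrDr mulrDl addrACA. Qed.

Lemma jprodDr x u v : jprod x (u + v) = jprod x u + jprod x v.
Proof. by rewrite !(jprodC x) jprodDl. Qed.

Lemma jprodZl c x y : jprod (c *: x) y = c *: jprod x y.
Proof. by rewrite /jprod -scalerAl -scalerAr scalerDr. Qed.

Lemma jprodZr c x y : jprod x (c *: y) = c *: jprod x y.
Proof. by rewrite !(jprodC x) jprodZl. Qed.

Lemma jprodNl x y : jprod (- x) y = - jprod x y.
Proof. by rewrite -scaleN1r jprodZl scaleN1r. Qed.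

Lemma jprodNr x y : jprod x (- y) = - jprod x y.
Proof. by rewrite !(jprodC x) jprodNl. Qed.

Lemma jprodBl x u v : jprod (u - v) x = jprod u x - jprod v x.
Proof. by rewrite jprodDl jprodNl. Qed.

Lemma jprodBr x u v : jprod x (u - v) = jprod x u - jprod x v.
Proof. by rewrite jprodDr jprodNr. Qed.

Lemma jprod1r x : jprod x 1 = x *+ 2.
Proof. by rewrite /jprod mulr1 mul1r mulr2n. Qed.

Lemma flinearD f : is_flinear f -> {morph f : x y / x + y}.
Proof. by move=> lin_f x y; rewrite -[x]scale1r lin_f !scale1r. Qed.

Lemma flinear_add f g :
  is_flinear f -> is_flinear g -> is_flinear (fun x => f x + g x).
Proof. by move=> lin_f lin_g c x y; rewrite lin_f lin_g scalerDr addrACA. Qed.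

Lemma flinear_opp f : is_flinear f -> is_flinear (fun x => - f x).
Proof. by move=> lin_f c x y; rewrite lin_f opprD scalerN. Qed.

Lemma flinear_scale c f : is_flinear f -> is_flinear (fun x => c *: f x).
Proof. by move=> lin_f d x y; rewrite lin_f scalerDr !scalerA mulrC. Qed.

Lemma QJCent_scale c f : QJCent f -> QJCent (fun x => c *: f x).
Proof.
case=> lin_f Cf; split; first exact: flinear_scale.
by move=> x y; rewrite jprodZl jprodZr Cf.
Qed.

Lemma QJDer_scale c f : QJDer f -> QJDer (fun x => c *: f x).
Proof.
case=> lin_f [h [lin_h Df]]; split; first exact: flinear_scale.
exists (fun z => c *: h z); split; first exact: flinear_scale.
by move=> x y; rewrite jprodZl jprodZr -scalerDr Df.
Qed.

Lemma QJCent_add_QJDer_GJDer f f1 f2 :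
  QJCent f1 -> QJDer f2 -> (forall x, f x = f1 x + f2 x) -> GJDer f.
Proof.
case=> lin_f1 C1 [lin_f2 [h [lin_h D2]]] def_f.
have lin_f : is_flinear f.
  by move=> c x y; rewrite !def_f (flinear_add lin_f1 lin_f2).
split=> //; exists (fun x => f2 x - f1 x), h; split=> //.
  exact: flinear_add (flinear_opp lin_f1).
by move=> x y; rewrite def_f jprodDl jprodBr C1 addrC addrA subrK addrC D2.
Qed.

Section GJDerSymmetrization.
Variables (f g h : A -> A).
Hypothesis fgh : forall x y, jprod (f x) y + jprod x (g y) = h (jprod x y).

Lemma GJDer_mirror x y : jprod x (f y) + jprod (g x) y = h (jprod x y).
Proof. by rewrite jprodC (jprodC (g x)) fgh jprodC. Qed.

Lemma GJDer_sub_QJCent :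
  is_flinear f -> is_flinear g -> QJCent (fun x => f x - g x).
Proof.
move=> lin_f lin_g; split; first exact: flinear_add (flinear_opp lin_g).
move=> x y; apply/eqP; rewrite jprodBl jprodBr subr_eq addrAC eq_sym subr_eq.
by rewrite GJDer_mirror fgh.
Qed.

Lemma GJDer_add_QJDer :
  is_flinear f -> is_flinear g -> is_flinear h -> QJDer (fun x => f x + g x).
Proof.
move=> lin_f lin_g lin_h; split; first exact: flinear_add.
exists (fun z => h z + h z); split; first exact: flinear_add.
by move=> x y; rewrite jprodDl jprodDr (addrC (jprod x (f y))) addrACA fgh
  (addrC (jprod (g x) y)) GJDer_mirror.
Qed.

End GJDerSymmetrization.

Lemma JCent_QJCent f : JCent f -> QJCent f.
Proof. by case=> lin_f Jf; split=> // x y; rewrite -Jf jprodC Jf jprodC. Qed.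

Lemma JCent_QJDer f : JCent f -> QJDer f.
Proof.
move=> Jf; have [lin_f Cf] := JCent_QJCent Jf; split=> //.
exists (fun z => f z + f z); split; first exact: flinear_add.
by move=> x y; rewrite -Cf Jf.2.
Qed.

Section CharNot2.
Hypothesis two_neq0 : (2%:R : F) != 0.

Lemma scale_half_double v : (2%:R)^-1 *: (v *+ 2) = v.
Proof. by rewrite -scaler_nat scalerA mulVf // scale1r. Qed.

Lemma double_inj : injective (fun v : A => v *+ 2).
Proof. exact: can_inj scale_half_double. Qed.

Lemma GJDer_QJCent_add_QJDer f : GJDer f ->
  exists f1 f2, [/\ QJCent f1, QJDer f2 & forall x, f x = f1 x + f2 x].
Proof.
case=> lin_f [g [h [lin_g lin_h fgh]]].
exists (fun x => (2%:R)^-1 *: (f x - g x)), (fun x => (2%:R)^-1 *: (f x + g x)).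
split.
- exact/QJCent_scale/GJDer_sub_QJCent.
- exact/QJDer_scale/(GJDer_add_QJDer fgh).
- by move=> x; rewrite -scalerDr addrACA addNr addr0 -mulr2n scale_half_double.
Qed.

Lemma QJCent_QJDer_JCent f : QJCent f -> QJDer f -> JCent f.
Proof.
case=> lin_f Cf [_ [h [lin_h Df]]].
have Df2 x y : jprod (f x) y *+ 2 = h (jprod x y) by rewrite -Df Cf mulr2n.
have h_double x : h x = f x *+ 2.
  apply: double_inj.
  by rewrite /= mulr2n -flinearD // -mulr2n -(jprod1r x) -Df2 jprod1r.
by split=> // x y; apply: double_inj; rewrite /= Df2 h_double.
Qed.

End CharNot2.

End JordanMapsTheory.

Theorem theorem2p1 (F : fieldType) (A : algType F)
    (hchar : ~~ (2%N \in [pchar F])) :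
  (forall f : A -> A,
      GJDer f <->
      exists f1 f2 : A -> A,
        [/\ QJCent f1, QJDer f2 & forall x, f x = f1 x + f2 x])
  /\
  (forall f : A -> A, JCent f <-> QJCent f /\ QJDer f).
Proof.
have two_neq0 : (2%:R : F) != 0 by move: hchar; rewrite inE.
split=> f; split.
- exact: GJDer_QJCent_add_QJDer.
- by case=> [f1 [f2 [C1 D2 def_f]]]; apply: QJCent_add_QJDer_GJDer def_f.
- by move=> Jf; split; [apply: JCent_QJCent | apply: JCent_QJDer].
- by case; apply: QJCent_QJDer_JCent.
Qed.
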